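(* Let $r$ be an odd positive integer, and let $n=2p_1^{\alpha_1}p_2^{\alpha_2}\cdots p_s^{\alpha_s}$ with $s\ge 1$, where $p_1<p_2<\cdots<p_s$ are odd primes and $\alpha_1,\ldots,\alpha_s$ are positive integers. Then $n\in G_r$ if and only if $n+r$ is composite and $p_s-r\neq 2p_1^{\alpha_1}p_2^{\alpha_2}\cdots p_{s-1}^{\alpha_{s-1}}$.
   Context: For a positive integer $r$, the $r$-th Schemmel totient function $S_r:\mathbb{N}\to\mathbb{N}_0$ is the multiplicative arithmetic function (so $S_r(1)=1$ and $S_r(ab)=S_r(a)S_r(b)$ for coprime $a,b$) defined on prime powers by $S_r(p^{\alpha})=0$ if $p\le r$ and $S_r(p^\alpha)=p^{\alpha-1}(p-r)$ if $p>r$, for all primes $p$ and positive integers $\alpha$. $G_r$ denotes the set of positive integers not in the range of $S_r$. For $s=1$ the empty product $p_1^{\alpha_1}\cdots p_{s-1}^{\alpha_{s-1}}$ equals $1$. *)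

From mathcomp Require Import all_boot all_order all_algebra.
Set Implicit Arguments. Unset Strict Implicit. Unset Printing Implicit Defensive.

(* Schemmel totient S_r, multiplicative, on prime powers:
   S_r(p^a) = 0 if p <= r, p^(a-1) (p - r) if p > r.  S_r(1) = 1 (empty product).
   The value at 0 is irrelevant (domain is positive integers). *)
Definition schemmel (r n : nat) : nat :=
  \prod_(p <- primes n) (if p <= r then 0 else p ^ (logn p n).-1 * (p - r)).

Definition in_G (r m : nat) : Prop :=
  0 < m /\ ~ (exists n, 0 < n /\ schemmel r n = m).

Definition composite (m : nat) : bool := (1 < m) && ~~ prime m.

From mathcomp Require Import all_boot all_order all_algebra.
From mathcomp Require Import zify.

Set Implicit Arguments.
Unset Strict Implicit.
Unset Printing Implicit Defensive.

(* Write n = 2 m with m odd and m > 1.  Every prime q > r contributes to S_r a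
   factor q^(k-1) (q - r), which is even when q is odd; the prime 2 contributes a
   power of 2.  Since 4 does not divide n, S_r(N) = n forces a single odd prime
   q of N to carry everything: n = q^c (q - r).  For c = 0, q = n + r is prime;
   for c > 0, q divides n, and comparing with the largest prime p_s of n shows
   q = p_s, c = alpha_s and p_s - r = 2 p_1^alpha_1 ... p_(s-1)^alpha_(s-1).
   Conversely these two cases are exactly S_r(n + r) = n and
   S_r(p_s^(alpha_s + 1)) = n. *)

Definition schemmel_pfactor (r N q : nat) : nat :=
  if q <= r then 0 else q ^ (logn q N).-1 * (q - r).

Lemma schemmelE r N : schemmel r N = \prod_(q <- primes N) schemmel_pfactor r N q.
Proof. by []. Qed.

Lemma schemmel_prime_power r q k :
  prime q -> r < q -> schemmel r (q ^ k.+1) = q ^ k * (q - r).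
Proof.
move=> q_pr rq; rewrite schemmelE primesX // primes_prime // big_seq1.
by rewrite /schemmel_pfactor pfactorK // leqNgt rq.
Qed.

Lemma schemmel_prime r q : prime q -> r < q -> schemmel r q = q - r.
Proof. by move=> q_pr rq; rewrite -[q]expn1 schemmel_prime_power // mul1n. Qed.

Lemma double_odd_neq_pow2 m k : odd m -> 1 < m -> 2 * m != 2 ^ k.
Proof.
move=> m_odd m_gt1; apply/eqP; case: k => [|k]; first by lia.
rewrite expnS => /eqP; rewrite eqn_pmul2l // => /eqP m_eq.
by move: m_odd; rewrite m_eq oddX orbF => /eqP k0; move: m_gt1; rewrite m_eq k0.
Qed.

(* An odd local factor is trivial: for odd q, q - r is even, and for q = 2 the
   factor is a power of 2 (or 0). *)
Lemma odd_schemmel_pfactor r N q :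
  odd r -> prime q -> odd (schemmel_pfactor r N q) -> schemmel_pfactor r N q = 1.
Proof.
rewrite /schemmel_pfactor => r_odd q_pr; case: leqP => // rq.
rewrite oddM oddB ?(ltnW rq) // r_odd addbT => /andP [+ q_even].
have [q2 | q_odd] := even_prime q_pr; last by rewrite q_odd in q_even.
have r1 : r = 1 by have := odd_gt0 r_odd; lia.
rewrite q2 r1 muln1 oddX orbF => /eqP ->.
by rewrite expn0.
Qed.

Lemma schemmel_eq_double_odd r N m :
  odd r -> odd m -> 1 < m -> schemmel r N = 2 * m ->
  exists q c, [/\ prime q, odd q, r < q & 2 * m = q ^ c * (q - r)].
Proof.
move=> r_odd m_odd m_gt1; rewrite schemmelE; set F := schemmel_pfactor r N => prodF.
have F_one x : x \in primes N -> odd (F x) -> F x = 1.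
  by rewrite mem_primes => /andP [x_pr _]; apply: odd_schemmel_pfactor.
have [x xN Fx_even] : exists2 x, x \in primes N & ~~ odd (F x).
  apply/hasP; apply: contraT; rewrite -all_predC => /allP F_odd.
  move: prodF; rewrite big1_seq; first by lia.
  by move=> i /andP [_ iN]; apply: (F_one i iN); move/F_odd: iN; rewrite /= negbK.
have rest_one : \prod_(y <- rem x (primes N)) F y = 1.
  apply: big1_seq => y /andP [_ yx]; apply: F_one; first exact: mem_rem yx.
  apply: contraT => Fy_even; have : 2 * 2 %| 2 * m.
    rewrite -prodF (big_rem x xN) (big_rem y yx) /= mulnA.
    by apply: dvdn_mulr; rewrite dvdn_mul // dvdn2.
  by rewrite dvdn_pmul2l // dvdn2 m_odd.
have {}prodF : 2 * m = F x by rewrite -prodF (big_rem x xN) /= rest_one muln1.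
move: prodF; rewrite /F /schemmel_pfactor; case: leqP => [_ | rx prodF]; first by lia.
have x_pr : prime x by move: xN; rewrite mem_primes => /andP [].
exists x, (logn x N).-1; split=> //.
have [x2 | //] := even_prime x_pr.
have r1 : r = 1 by have := odd_gt0 r_odd; lia.
by move: prodF; rewrite x2 r1 muln1 => /eqP; rewrite (negbTE (double_odd_neq_pow2 _ m_odd m_gt1)).
Qed.

Lemma pfactor_mul_cancel q a b u v : prime q -> ~~ (q %| u) -> ~~ (q %| v) ->
  q ^ a * u = q ^ b * v -> a = b /\ u = v.
Proof.
move=> q_pr qu qv eq_uv.
have logE w c : ~~ (q %| w) -> logn q (q ^ c * w) = c.
  move=> qw; have w_gt0 : 0 < w by case: w qw; rewrite ?dvdn0.
  by rewrite lognM ?expn_gt0 ?(prime_gt0 q_pr) // pfactorK // logn_coprime ?addn0 // prime_coprime.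
have ab : a = b by rewrite -(logE u a qu) eq_uv logE.
have q_pow_gt0 : 0 < q ^ a by rewrite expn_gt0 prime_gt0.
by split=> //; apply/eqP; rewrite -(eqn_pmul2l q_pow_gt0) eq_uv ab.
Qed.

Lemma prime_dvd_prod_pow k (p alpha : nat -> nat) x :
  (forall i, i < k -> prime (p i)) -> prime x ->
  x %| \prod_(i < k) p i ^ alpha i -> exists2 i, i < k & x = p i.
Proof.
move=> p_pr x_pr; rewrite Euclid_dvd_prod // big_has => /hasP [i _].
rewrite Euclid_dvdX // => /andP [x_dvd _]; exists i => //.
by apply/eqP; rewrite -dvdn_prime2 ?p_pr.
Qed.

Section DoublePrimePower.

Variables (r m q a : nat).
Hypotheses (r_odd : odd r) (q_pr : prime q) (q_odd : odd q) (a_gt0 : 0 < a).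
Hypotheses (m_odd : odd m) (m_small : forall x, prime x -> x %| m -> x < q).

Let n := 2 * (m * q ^ a).

Lemma schemmel_eq_double_prime_power N c :
  prime N -> odd N -> r < N -> n = N ^ c.+1 * (N - r) -> N = q.
Proof.
move=> N_pr N_odd rN n_eq.
have : N %| m * q ^ a.
  by rewrite -(@Gauss_dvdr N 2) ?coprimen2 // -/n n_eq expnS -mulnA dvdn_mulr.
rewrite Euclid_dvdM // Euclid_dvdX // a_gt0 andbT (dvdn_prime2 N_pr q_pr).
case/orP=> [/(m_small N_pr) Nq | /eqP //].
have : q %| N ^ c.+1 * (N - r) by rewrite -n_eq; apply/dvdn_mull/dvdn_mull/dvdn_exp.
rewrite Euclid_dvdM // Euclid_dvdX // (dvdn_prime2 q_pr N_pr) (gtn_eqF Nq) /=.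
by move/dvdn_leq; lia.
Qed.

Lemma in_G_double_prime_power :
  in_G r n <-> composite (n + r) /\ q != 2 * m + r.
Proof.
have r_gt0 := odd_gt0 r_odd.
have q_gt1 := prime_gt1 q_pr.
have n_gt0 : 0 < n by rewrite /n !muln_gt0 (odd_gt0 m_odd) expn_gt0 (ltnW q_gt1).
split=> [[_ not_val] | [n_comp q_neq]].
  split.
    have nr_gt1 : 1 < n + r by lia.
    rewrite /composite nr_gt1 /=; apply/negP => nr_pr; apply: not_val.
    exists (n + r); split; first by rewrite addn_gt0 n_gt0.
    by rewrite schemmel_prime ?addnK //; lia.
  apply/negP => /eqP q_eq; apply: not_val; exists (q ^ a.+1).
  split; first by rewrite expn_gt0 ltnW.
  have qr : q - r = 2 * m by rewrite q_eq addnK.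
  rewrite schemmel_prime_power //; last by rewrite q_eq; have := odd_gt0 m_odd; lia.
  by rewrite qr /n mulnCA (mulnC m).
split=> // -[N [_ N_val]].
have m'_odd : odd (m * q ^ a) by rewrite oddM m_odd oddX q_odd orbT.
have m'_gt1 : 1 < m * q ^ a.
  have : q ^ 1 <= q ^ a by rewrite leq_pexp2l // ltnW.
  by rewrite expn1; have := odd_gt0 m_odd; nia.
have [Q [c [Q_pr Q_odd rQ n_eq]]] := schemmel_eq_double_odd r_odd m'_odd m'_gt1 N_val.
case: c n_eq => [|c] n_eq.
  by move: n_comp; rewrite /composite /n n_eq expn0 mul1n subnK ?(ltnW rQ) // Q_pr andbF.
have Qq := schemmel_eq_double_prime_power Q_pr Q_odd rQ n_eq; subst Q.
have q_ndvd_2m : ~~ (q %| 2 * m).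
  have q_ndvd_m : ~~ (q %| m) by apply/negP => /(m_small q_pr); rewrite ltnn.
  have q_neq2 : q != 2 by apply: contraTneq q_odd => ->.
  by rewrite Euclid_dvdM // (negbTE q_ndvd_m) orbF dvdn_prime2.
have q_ndvd_qr : ~~ (q %| q - r) by apply/negP => /dvdn_leq; lia.
have [_ qr_eq] : a = c.+1 /\ 2 * m = q - r.
  by apply: (pfactor_mul_cancel q_pr) => //; rewrite mulnCA (mulnC _ m) -n_eq.
by move: q_neq; rewrite qr_eq subnK ?eqxx // ltnW.
Qed.

End DoublePrimePower.

Theorem theorem3p1 (r s : nat) (p alpha : nat -> nat) :
  0 < r -> odd r -> 1 <= s ->
  (forall i, i < s -> prime (p i) /\ odd (p i) /\ 0 < alpha i) ->
  (forall i j, i < j -> j < s -> p i < p j) ->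
  in_G r (2 * \prod_(i < s) p i ^ alpha i) <->
  (composite (2 * \prod_(i < s) p i ^ alpha i + r) /\
   ((p s.-1)%:Z - r%:Z <> (2 * \prod_(i < s.-1) p i ^ alpha i)%:Z)%R).
Proof.
move=> _ r_odd; case: s => [//|s] _ hp p_incr; rewrite big_ord_recr /=.
have [q_pr [q_odd a_gt0]] := hp s (ltnSn s).
have p_pr i : i < s -> prime (p i) by move=> lt_is; case: (hp i (ltnW lt_is)).
have m_small x : prime x -> x %| \prod_(i < s) p i ^ alpha i -> x < p s.
  by move=> x_pr /(prime_dvd_prod_pow p_pr x_pr) [i lt_is ->]; apply: p_incr.
have m_odd : odd (\prod_(i < s) p i ^ alpha i).
  apply: contraT; rewrite -dvdn2 => /(prime_dvd_prod_pow p_pr (isT : prime 2)) [i lt_is p2].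
  by have [_ [+ _]] := hp i (ltnW lt_is); rewrite -p2.
rewrite in_G_double_prime_power //.
by split=> -[comp ne]; split=> //; apply/eqP; move: ne; [lia|move/eqP; lia].
Qed.
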